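(* Let $\Sigma$ be a finite alphabet. A language $L \subseteq \Sigma^*$ belongs to $\mathsf{F}(\mathcal{O}(1))$ if and only if there exists $k \ge 0$ such that $L_n = \{w\in\Sigma^* : \mathrm{last}_n(w)\in L\}$ is $k$-suffix testable for all $n \ge 0$.
   Context: Fix $a\in\Sigma$; $\mathrm{last}_n(a_1\cdots a_m)=a_{m-n+1}\cdots a_m$ if $n\le m$, else $a^{n-m}a_1\cdots a_m$. A fixed-size sliding window algorithm for $L$ is a sequence $(\mathcal{A}_n)_{n\ge0}$ of deterministic (possibly infinite-state) automata with injective encodings of their states into bit strings, $\mathcal{A}_n$ accepting $L_n$; its space complexity at $n$ is the maximal encoding length of a state of $\mathcal{A}_n$. $\mathsf{F}(\mathcal{O}(1))$ is the class of languages having such an algorithm of constant space complexity. $K$ is $k$-suffix testable if for all $x,y\in\Sigma^*$ and $z\in\Sigma^k$: $xz\in K\iff yz\in K$. *)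

From mathcomp Require Import all_boot.
Set Implicit Arguments. Unset Strict Implicit. Unset Printing Implicit Defensive.

Definition lastn (Sigma : Type) (a : Sigma) (n : nat) (w : seq Sigma) : seq Sigma :=
  if n <= size w then drop (size w - n) w else nseq (n - size w) a ++ w.

Definition Ln (Sigma : Type) (a : Sigma) (L : seq Sigma -> Prop) (n : nat)
  : seq Sigma -> Prop := fun w => L (lastn a n w).

(* deterministic, possibly infinite-state automaton with an injective
   encoding of its states into bit strings *)
Record EncDFA (Sigma : Type) := {
  dstate : Type;
  dinit : dstate;
  ddelta : dstate -> Sigma -> dstate;
  dfinal : dstate -> Prop;
  denc : dstate -> seq bool;
  denc_inj : injective denc }.

Definition daccepts (Sigma : Type) (A : EncDFA Sigma) (w : seq Sigma) : Prop :=
  @dfinal _ A (foldl (@ddelta _ A) (@dinit _ A) w).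

Definition sw_algorithm (Sigma : Type) (a : Sigma) (L : seq Sigma -> Prop)
  (A : nat -> EncDFA Sigma) : Prop :=
  forall n w, daccepts (A n) w <-> Ln a L n w.

Definition space_le (Sigma : Type) (A : EncDFA Sigma) (c : nat) : Prop :=
  forall q : dstate A, size (@denc _ A q) <= c.

Definition in_F_O1 (Sigma : Type) (a : Sigma) (L : seq Sigma -> Prop) : Prop :=
  exists A : nat -> EncDFA Sigma, sw_algorithm a L A /\
    exists c n0 : nat, forall n, n0 <= n -> space_le (A n) c.

Definition suffix_testable (Sigma : Type) (k : nat) (K : seq Sigma -> Prop) : Prop :=
  forall x y z : seq Sigma, size z = k -> (K (x ++ z) <-> K (y ++ z)).

(* Space c allows at most N = 2^(c+1) - 1 state encodings, so for large n the
   automaton for L_n has at most N states.  Reading x z and y z letter by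
   letter, with |z| >= N^2, the pair of current states repeats, so z = u v w
   with v nonempty looping in both runs.  Pumping v then makes the common
   suffix longer than n, which fixes last_n and hence membership in L_n:
   L_n is N^2-suffix testable.  Conversely, if every L_n is k-suffix
   testable, membership in L_n only depends on the last k letters, which a
   finite automaton with states Sigma^k can maintain. *)

From mathcomp Require Import all_boot.
From mathcomp Require Import zify.

Set Implicit Arguments.
Unset Strict Implicit.
Unset Printing Implicit Defensive.

Section Lastn.

Variables (S : Type) (a : S).

Lemma lastnE n w : lastn a n w = drop (size w) (nseq n a ++ w).
Proof.
rewrite /lastn drop_cat size_nseq.
case: ifP => ?; case: ifP => ? //; try lia.
by rewrite drop_nseq.
Qed.

Lemma size_lastn n w : size (lastn a n w) = n.
Proof. by rewrite lastnE size_drop size_cat size_nseq addnK. Qed.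

Lemma cat_take_lastn n w :
  nseq n a ++ w = take (size w) (nseq n a ++ w) ++ lastn a n w.
Proof. by rewrite lastnE cat_take_drop. Qed.

Lemma lastn_cat n s t : n <= size t -> lastn a n (s ++ t) = lastn a n t.
Proof.
move=> le_nt; rewrite !lastnE size_cat !drop_cat ?size_nseq ?size_cat ?size_nseq.
repeat case: ifP => ?; try lia.
congr drop; lia.
Qed.

Lemma lastn_pad n j w : lastn a n (nseq j a ++ w) = lastn a n w.
Proof.
rewrite !lastnE catA -nseqD (addnC n j) nseqD -catA size_cat size_nseq.
by rewrite (addnC j) -drop_drop drop_size_cat ?size_nseq.
Qed.

Lemma lastn_lastn_cat n s w : lastn a n (lastn a n s ++ w) = lastn a n (s ++ w).
Proof.
rewrite -(lastn_pad n n (s ++ w)) catA cat_take_lastn -catA [RHS]lastn_cat //.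
by rewrite size_cat size_lastn leq_addr.
Qed.

End Lastn.

Section SuffixTestable.

Variables (S : Type) (K : seq S -> Prop).

Lemma suffix_testable_mono k k' :
  k <= k' -> suffix_testable k K -> suffix_testable k' K.
Proof.
move=> le_kk' testK x y z size_z.
rewrite -(cat_take_drop (k' - k) z) !catA; apply: testK.
by rewrite size_drop size_z; lia.
Qed.

Lemma suffix_testable_lastn k (a : S) w :
  suffix_testable k K -> K (nseq k a ++ w) <-> K (lastn a k w).
Proof.
move=> testK; rewrite cat_take_lastn.
by apply: (testK _ [::]); rewrite size_lastn.
Qed.

End SuffixTestable.

Lemma suffix_testable_Ln (S : Type) (a : S) L n k :
  n <= k -> suffix_testable k (Ln a L n).
Proof.
move=> le_nk x y z size_z.
by rewrite /Ln !lastn_cat ?size_z.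
Qed.

Lemma Ln_pad (S : Type) (a : S) L n j w : Ln a L n (nseq j a ++ w) <-> Ln a L n w.
Proof. by rewrite /Ln lastn_pad. Qed.

Lemma pigeonhole (U : eqType) (B : seq U) (g : nat -> U) m :
  size B <= m -> (forall i, i <= m -> g i \in B) ->
  exists i j, [/\ i < j, j <= m & g i = g j].
Proof.
move=> le_Bm gB.
have : ~~ uniq [seq g i | i <- iota 0 m.+1].
  apply/negP => /uniq_leq_size le_B.
  have : m.+1 <= size B.
    rewrite -(size_iota 0 m.+1) -(size_map g); apply: le_B.
    by move=> ? /mapP [i + ->]; rewrite mem_iota => lt_im; apply: gB.
  by rewrite ltnNge le_Bm.
case/(uniqPn (g 0)) => i [j [lt_ij]]; rewrite size_map size_iota => lt_jm.
rewrite !(nth_map 0) ?size_iota ?(ltn_trans lt_ij) // !nth_iota ?(ltn_trans lt_ij) //.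
by exists i, j.
Qed.

Lemma foldl_pump (S T : Type) (d : T -> S -> T) q v w r :
  foldl d q v = q -> foldl d q (v ++ w) = foldl d q (flatten (nseq r v) ++ w).
Proof.
move=> loop_v; rewrite !foldl_cat loop_v; congr foldl.
by elim: r => //= r IH; rewrite foldl_cat loop_v.
Qed.

Lemma size_flatten_nseq (S : Type) (v : seq S) r :
  size (flatten (nseq r v)) = size v * r.
Proof. by rewrite size_flatten /shape map_nseq sumn_nseq. Qed.

Section BoundedAutomaton.

Variables (S : Type) (A : EncDFA S) (B : seq (seq bool)) (K : seq S -> Prop).
Hypothesis denc_in : forall q : dstate A, denc q \in B.
Hypothesis A_accepts : forall w, daccepts A w <-> K w.

Let run := foldl (@ddelta _ A) (@dinit _ A).

Lemma suffix_testable_bounded_dfa n :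
  suffix_testable n K -> suffix_testable (size B * size B) K.
Proof.
move=> testK x y z size_z.
pose g i := (denc (run (x ++ take i z)), denc (run (y ++ take i z))).
have [i [j [lt_ij le_jz]]] : exists i j, [/\ i < j, j <= size z & g i = g j].
  apply: (@pigeonhole _ [seq (p, q) | p <- B, q <- B]).
    by rewrite size_allpairs size_z.
  by move=> i _; apply: allpairs_f.
case=> /denc_inj loop_x /denc_inj loop_y.
set u := take i z; set v := drop i (take j z); set w := drop j z.
have take_j : take j z = u ++ v.
  by rewrite -{1}(cat_take_drop i (take j z)) take_takel // ltnW.
have z_uvw : z = u ++ v ++ w by rewrite catA -take_j cat_take_drop.
have size_v : size v = j - i by rewrite size_drop size_takel.
have le_n_pumped : n <= size (flatten (nseq n v) ++ w).
  by rewrite size_cat size_flatten_nseq size_v; nia.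
have run_cat s t : run (s ++ t) = foldl (@ddelta _ A) (run s) t.
  exact: foldl_cat.
have acc_pump x' : run (x' ++ take i z) = run (x' ++ take j z) ->
    K (x' ++ z) <-> K (x' ++ u ++ flatten (nseq n v) ++ w).
  rewrite -/u take_j catA (run_cat (x' ++ u)) => /esym loop.
  rewrite -!A_accepts /daccepts -/run z_uvw !(catA x') !(run_cat (x' ++ u)).
  by rewrite (foldl_pump w n loop).
apply: (iff_trans (acc_pump x loop_x)); apply: iff_sym.
apply: (iff_trans (acc_pump y loop_y)); rewrite !(catA _ u).
exact: (suffix_testable_mono le_n_pumped testK).
Qed.

End BoundedAutomaton.

Definition bitseqs_upto (c : nat) : seq (seq bool) :=
  flatten [seq map (@tval m bool) (enum {: m.-tuple bool}) | m <- iota 0 c.+1].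

Lemma mem_bitseqs_upto c s : size s <= c -> s \in bitseqs_upto c.
Proof.
move=> le_sc; apply/flatten_mapP; exists (size s).
  by rewrite mem_iota add0n ltnS.
by rewrite (_ : s = tval (in_tuple s)) // map_f ?mem_enum.
Qed.

Section FiniteAutomaton.

Variables (S : Type) (T : finType).

Lemma unary_rank_inj : injective (fun q : T => nseq (enum_rank q) true).
Proof.
move=> p q /(congr1 size); rewrite !size_nseq => /val_inj; exact: enum_rank_inj.
Qed.

Definition finDFA (q0 : T) (d : T -> S -> T) (f : T -> Prop) : EncDFA S :=
  {| dstate := T; dinit := q0; ddelta := d; dfinal := f;
     denc := fun q => nseq (enum_rank q) true; denc_inj := unary_rank_inj |}.

Lemma space_finDFA q0 d f : space_le (finDFA q0 d f) #|T|.
Proof. by move=> q /=; rewrite size_nseq ltnW. Qed.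

End FiniteAutomaton.

Section Window.

Variables (S : Type) (a : S) (k : nat).

Definition window_step (t : k.-tuple S) (x : S) : k.-tuple S :=
  Tuple (introT eqP (size_lastn a k (rcons t x))).

Lemma window_run (t : k.-tuple S) w :
  val (foldl window_step t w) = lastn a k (val t ++ w).
Proof.
elim: w t => [|x w IH] t /=.
  by rewrite cats0 /lastn size_tuple leqnn subnn drop0.
by rewrite IH /= lastn_lastn_cat cat_rcons.
Qed.

End Window.

Theorem corollary6p4 (Sigma : finType) (a : Sigma) (L : seq Sigma -> Prop) :
  in_F_O1 a L <-> exists k : nat, forall n : nat, suffix_testable k (Ln a L n).
Proof.
split.
- move=> [A [A_Ln [c [n0 space_A]]]].
  set N := size (bitseqs_upto c).
  exists (maxn n0 (N * N)) => n.
  case: (ltnP n n0) => [lt_n_n0 | le_n0_n].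
    by apply: suffix_testable_Ln; rewrite leq_max ltnW.
  apply: (suffix_testable_mono (leq_maxr _ _)).
  apply: (suffix_testable_bounded_dfa _ (A_Ln n) (suffix_testable_Ln _ _ (leqnn n))).
  by move=> q; apply/mem_bitseqs_upto/space_A.
- move=> [k testL].
  exists (fun n => finDFA (nseq_tuple k a) (@window_step _ a k) (Ln a L n)).
  split; last by exists #|{: k.-tuple Sigma}|, 0 => n _; apply: space_finDFA.
  move=> n w; rewrite /daccepts /= window_run lastn_pad.
  by rewrite -(suffix_testable_lastn _ _ (testL n)) Ln_pad.
Qed.
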